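(* Assume the setting below, and assume additionally: (i) there is a constant $\Lambda\ge0$ with $\overline{L}^{(m)}_n\le\Lambda$ for all $m\ge m_0$ and $n\ge0$; (ii) the computed orbits are valid, i.e. $|\hat{x}^{(m)}_n-x_n|\le\overline{e}^{(m)}_n$ for all $m\ge m_0$ and $n\ge0$; (iii) $\overline{L}^{(m)}_n\ge\sup\{|f'(z)|: z\in[\hat{x}^{(m)}_n-\overline{e}^{(m)}_n,\hat{x}^{(m)}_n+\overline{e}^{(m)}_n]\cap\operatorname{int}D\}$ for all $m\ge m_0$, $n\ge0$; (iv) $x_n\in\operatorname{int}D$ for all $n\ge0$ and the Ljapunow exponent $\lambda(x_0)$ exists as a real number. Then for every $p\in\mathbb{Z}$, $$\sigma(x_0,p)\ge\frac{\lambda(x_0)}{\ln 2}.$$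
   Context: Setting. $D\subset\mathbb{R}$ is a compact interval with $0\notin D$, and $f:D\to D$ is continuous on $D$, continuously differentiable on $\operatorname{int}D$, with $f'$ bounded on $\operatorname{int}D$. Fix $K>0$ and an integer $m_0\ge1$ with $K2^{-m_0}<1$, and put $\delta_m:=\frac{K2^{-m}}{1-K2^{-m}}$ for integers $m\ge m_0$. Fix an initial value $x_0\in D$ and let $x_n:=f^n(x_0)$. For each integer $m\ge m_0$ (the mantissa length) a computed orbit is given: sequences $(\hat{x}^{(m)}_n)_{n\ge0}\subset D$, $(\overline{e}^{(m)}_n)_{n\ge0}$ and numbers $\overline{L}^{(m)}_n\ge0$ with $\overline{e}^{(m)}_0=\delta_m|\hat{x}^{(m)}_0|$ and $\overline{e}^{(m)}_{n+1}=\overline{L}^{(m)}_n\overline{e}^{(m)}_n+\delta_m|\hat{x}^{(m)}_{n+1}|$. For $N\in\mathbb{N}$ and $p\in\mathbb{Z}$, the minimal mantissa length $m_{min}(x_0,N,p)$ is the least integer $m\ge m_0$ such that $\overline{e}^{(m)}_n\le\frac{10^{-p}}{1+10^{-p}}|\hat{x}^{(m)}_n|$ for all $n=0,\dots,N$. The loss of significance rate is $\sigma(x_0,p):=\limsup_{N\to\infty}m_{min}(x_0,N,p)/N$. The Ljapunow exponent at $x$ (for $x$ whose orbit stays in $\operatorname{int}D$) is $\lambda(x):=\lim_{n\to\infty}\frac1n\sum_{k=0}^{n-1}\ln|f'(f^k(x))|$ when this limit exists. *)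

From Stdlib Require Import Reals Lra Lia ZArith Classical ClassicalEpsilon.
Open Scope R_scope.

Definition orbit (f : R -> R) (x0 : R) (n : nat) : R := Nat.iter n f x0.

Fixpoint psum (g : nat -> R) (n : nat) : R :=
  match n with
  | O => 0
  | S k => psum g k + g k
  end.

Definition delta (K : R) (m : nat) : R :=
  K * (/2) ^ m / (1 - K * (/2) ^ m).

(* accuracy condition for mantissa length m up to step N, precision p *)
Definition good (xhat ebar : nat -> nat -> R) (p : Z) (N m : nat) : Prop :=
  forall n : nat, (n <= N)%nat ->
    ebar m n <= powerRZ 10 (- p) / (1 + powerRZ 10 (- p)) * Rabs (xhat m n).

Definition is_mmin (m0 : nat) (xhat ebar : nat -> nat -> R) (p : Z) (N m : nat) : Prop :=
  (m0 <= m)%nat /\ good xhat ebar p N m /\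
  (forall m' : nat, (m0 <= m')%nat -> (m' < m)%nat -> ~ good xhat ebar p N m').

(* minimal mantissa length m_min(x0,N,p) (chosen via Hilbert epsilon; it is
   the unique least element whenever one exists) *)
Definition m_min (m0 : nat) (xhat ebar : nat -> nat -> R) (p : Z) (N : nat) : nat :=
  epsilon (inhabits 0%nat) (is_mmin m0 xhat ebar p N).

(* limsup_{N -> oo} u N >= c  (limsup taken in the extended reals) *)
Definition limsup_ge (u : nat -> R) (c : R) : Prop :=
  forall eps : R, eps > 0 -> forall N0 : nat, exists N : nat, (N >= N0)%nat /\ u N >= c - eps.

Definition sigma_ge (m0 : nat) (xhat ebar : nat -> nat -> R) (p : Z) (c : R) : Prop :=
  limsup_ge (fun N => INR (m_min m0 xhat ebar p N) / INR N) c.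

(** The error bounds of a valid computed orbit obey the recursion
    [e_(n+1) = L_n e_n + delta_m |x^_(n+1)|] with [L_n >= |f'(x_n)|], so
    [e_n >= delta_m min|D| prod_(k<n) |f'(x_k)|]: the error grows at least
    like [2^(-m) exp(n lambda)].  The accuracy condition at step [N] keeps
    [e_N] below a fixed multiple of [max|D|], hence
    [m_min(N) ln 2 >= sum_(k<N) ln|f'(x_k)| + O(1)], and dividing by [N]
    gives [sigma >= lambda / ln 2].  The upper bound [L_n <= Lambda] only
    serves to show that [m_min] exists, since then [e_N] is at most
    [delta_m] times a quantity independent of [m]. *)

From Stdlib Require Import Reals ZArith Lra Lia Classical ClassicalEpsilon Wf_nat.
Open Scope R_scope.

Lemma ln_le x y : 0 < x -> x <= y -> ln x <= ln y.
Proof.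
  intros Hx [Hxy | ->]; [now left; apply ln_increasing | apply Rle_refl].
Qed.

Lemma Rabs_bounds_interval a b x :
  a <= b -> ~ (a <= 0 <= b) -> a <= x <= b ->
  0 < Rmin (Rabs a) (Rabs b) /\
  Rmin (Rabs a) (Rabs b) <= Rabs x <= Rmax (Rabs a) (Rabs b).
Proof.
  intros Hab H0 Hx.
  destruct (Rlt_dec 0 a) as [Ha | Ha].
  - rewrite !Rabs_right by lra. unfold Rmin, Rmax; destruct Rle_dec; lra.
  - rewrite !Rabs_left by lra. unfold Rmin, Rmax; destruct Rle_dec; lra.
Qed.

Section Delta.

Variables (K : R) (m0 : nat).
Hypotheses (K_pos : 0 < K) (K_m0 : K * (/2) ^ m0 < 1).

Lemma halfpow_pos m : 0 < (/2) ^ m.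
Proof. apply pow_lt; lra. Qed.

Lemma halfpow_le m : (m0 <= m)%nat -> (/2) ^ m <= (/2) ^ m0.
Proof.
  intros Hm. rewrite !pow_inv.
  apply Rinv_le_contravar; [apply pow_lt; lra | apply Rle_pow; [lra | exact Hm]].
Qed.

Lemma delta_ge m : (m0 <= m)%nat -> K * (/2) ^ m <= delta K m.
Proof.
  intros Hm. unfold delta.
  pose proof (halfpow_pos m). pose proof (halfpow_le m Hm).
  assert (K * (/2) ^ m <= K * (/2) ^ m0) by (apply Rmult_le_compat_l; lra).
  apply (Rmult_le_reg_r (1 - K * (/2) ^ m)); [lra |].
  field_simplify; [nra | lra].
Qed.

Lemma delta_pos m : (m0 <= m)%nat -> 0 < delta K m.
Proof.
  intros Hm. pose proof (delta_ge m Hm). pose proof (halfpow_pos m). nra.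
Qed.

Lemma delta_le m : (m0 <= m)%nat -> delta K m <= K * (/2) ^ m / (1 - K * (/2) ^ m0).
Proof.
  intros Hm. unfold delta, Rdiv.
  pose proof (halfpow_pos m). pose proof (halfpow_le m Hm).
  apply Rmult_le_compat_l; [nra |].
  apply Rinv_le_contravar; [lra |].
  assert (K * (/2) ^ m <= K * (/2) ^ m0) by (apply Rmult_le_compat_l; lra).
  lra.
Qed.

Lemma delta_small eps : 0 < eps -> exists m, (m0 <= m)%nat /\ delta K m <= eps.
Proof.
  intros Heps.
  assert (Hq : 0 < 1 - K * (/2) ^ m0) by lra.
  destruct (pow_lt_1_zero (/2) ltac:(rewrite Rabs_right; lra)
              (eps * (1 - K * (/2) ^ m0) / K)) as [M HM].
  { apply Rdiv_lt_0_compat; nra. }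
  exists (M + m0)%nat. split; [lia |].
  specialize (HM (M + m0)%nat ltac:(lia)).
  rewrite Rabs_right in HM by (left; apply halfpow_pos).
  eapply Rle_trans; [apply delta_le; lia |].
  apply (Rmult_le_reg_r (1 - K * (/2) ^ m0)); [exact Hq |].
  apply (Rmult_lt_compat_l K) in HM; [| exact K_pos].
  replace (K * (eps * (1 - K * (/2) ^ m0) / K)) with (eps * (1 - K * (/2) ^ m0))
    in HM by (field; lra).
  replace (K * (/2) ^ (M + m0) / (1 - K * (/2) ^ m0) * (1 - K * (/2) ^ m0))
    with (K * (/2) ^ (M + m0)) by (field; lra).
  lra.
Qed.

End Delta.

Section ErrorRecursion.

Variables (dlt : R) (xh L e : nat -> R).
Hypotheses (dlt_ge0 : 0 <= dlt)
  (e_0 : e 0%nat = dlt * Rabs (xh 0%nat))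
  (e_S : forall n, e (S n) = L n * e n + dlt * Rabs (xh (S n))).

Lemma error_ge_prod (d : R) (r : nat -> R) :
  0 <= d -> (forall n, d <= Rabs (xh n)) -> (forall n, 0 < r n <= L n) ->
  forall n, dlt * d * exp (psum (fun k => ln (r k)) n) <= e n.
Proof.
  intros Hd Hxh Hr. induction n as [| n IH].
  - rewrite e_0; simpl. rewrite exp_0, Rmult_1_r.
    apply Rmult_le_compat_l; auto.
  - rewrite e_S; simpl. rewrite exp_plus, exp_ln by apply Hr.
    pose proof (Hr n). pose proof (Hxh (S n)).
    assert (0 <= dlt * d * exp (psum (fun k => ln (r k)) n))
      by (pose proof (exp_pos (psum (fun k => ln (r k)) n)); apply Rmult_le_pos; nra).
    assert (0 <= dlt * Rabs (xh (S n))) by (apply Rmult_le_pos; [lra | apply Rabs_pos]).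
    nra.
Qed.

Lemma error_le_poly (B Lam : R) :
  (forall n, Rabs (xh n) <= B) -> (forall n, 0 <= L n <= Lam) ->
  forall n, e n <= dlt * B * (INR n + 1) * (1 + Lam) ^ n.
Proof.
  intros HB HL.
  assert (e_ge0 : forall n, 0 <= e n).
  { induction n as [| n IH].
    - rewrite e_0. pose proof (Rabs_pos (xh 0%nat)). nra.
    - rewrite e_S. pose proof (Rabs_pos (xh (S n))). pose proof (HL n). nra. }
  assert (B_ge0 : 0 <= B) by (pose proof (Rabs_pos (xh 0%nat)); pose proof (HB 0%nat); lra).
  assert (Lam_ge0 : 0 <= Lam) by (pose proof (HL 0%nat); lra).
  induction n as [| n IH].
  - rewrite e_0; simpl. pose proof (HB 0%nat). nra.
  - rewrite e_S, S_INR; simpl pow.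
    set (P := (1 + Lam) ^ n) in *.
    assert (1 <= P) by (apply pow_R1_Rle; lra).
    pose proof (pos_INR n). pose proof (HL n). pose proof (HB (S n)).
    assert (dlt * Rabs (xh (S n)) <= dlt * B) by (apply Rmult_le_compat_l; lra).
    assert (L n * e n <= Lam * (dlt * B * (INR n + 1) * P))
      by (apply Rmult_le_compat; try apply e_ge0; lra).
    assert (0 <= dlt * B) by (apply Rmult_le_pos; lra).
    assert (dlt * B <= dlt * B * P) by nra.
    assert (0 <= dlt * B * (INR n + 1) * P) by (repeat apply Rmult_le_pos; lra).
    assert (0 <= Lam * (dlt * B * P)) by (apply Rmult_le_pos; nra).
    assert (dlt * B * (INR n + 1 + 1) * ((1 + Lam) * P) =
      dlt * B * (INR n + 1) * P + Lam * (dlt * B * (INR n + 1) * P)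
      + dlt * B * P + Lam * (dlt * B * P)) by ring.
    lra.
Qed.

End ErrorRecursion.

Lemma growth_le (Lam : R) (n N : nat) :
  0 <= Lam -> (n <= N)%nat -> (INR n + 1) * (1 + Lam) ^ n <= (INR N + 1) * (1 + Lam) ^ N.
Proof.
  intros HLam Hn.
  pose proof (pos_INR n). pose proof (le_INR _ _ Hn).
  assert (1 <= (1 + Lam) ^ n) by (apply pow_R1_Rle; lra).
  assert ((1 + Lam) ^ n <= (1 + Lam) ^ N) by (apply Rle_pow; [lra | exact Hn]).
  apply Rmult_le_compat; lra.
Qed.

Definition rel_tol (p : Z) : R := powerRZ 10 (- p) / (1 + powerRZ 10 (- p)).

Lemma rel_tol_pos p : 0 < rel_tol p.
Proof.
  pose proof (powerRZ_lt 10 (- p) ltac:(lra)).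
  unfold rel_tol; apply Rdiv_lt_0_compat; lra.
Qed.

Lemma good_exists (xhat ebar : nat -> nat -> R) (p : Z) (N m0 : nat) (K d B Lam : R) :
  0 < K -> K * (/2) ^ m0 < 1 -> 0 < d -> 0 < B -> 0 <= Lam ->
  (forall m n, (m0 <= m)%nat -> d <= Rabs (xhat m n)) ->
  (forall m n, (m0 <= m)%nat -> ebar m n <= delta K m * B * (INR n + 1) * (1 + Lam) ^ n) ->
  exists m, (m0 <= m)%nat /\ good xhat ebar p N m.
Proof.
  intros HK HKm0 Hd HB HLam Hxhat Hebar.
  pose proof (rel_tol_pos p) as Hc. set (c := rel_tol p) in *.
  set (F := B * ((INR N + 1) * (1 + Lam) ^ N)).
  assert (HF : 0 < F).
  { pose proof (pos_INR N). pose proof (pow_lt (1 + Lam) N ltac:(lra)).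
    unfold F; repeat apply Rmult_lt_0_compat; lra. }
  destruct (delta_small K m0 HK HKm0 (c * d / F)) as [m [Hm Hdm]].
  { apply Rdiv_lt_0_compat; nra. }
  exists m. split; [exact Hm |]. intros n Hn. change (ebar m n <= c * Rabs (xhat m n)).
  pose proof (delta_pos K m0 HK HKm0 m Hm). specialize (Hxhat m n Hm).
  apply Rle_trans with (delta K m * F).
  - eapply Rle_trans; [apply Hebar, Hm |].
    unfold F. rewrite !Rmult_assoc. apply Rmult_le_compat_l; [lra |].
    apply Rmult_le_compat_l; [lra |].
    apply growth_le; assumption.
  - apply (Rmult_le_compat_r F) in Hdm; [| lra].
    unfold Rdiv in Hdm. rewrite Rmult_assoc, Rinv_l, Rmult_1_r in Hdm by lra.
    assert (c * d <= c * Rabs (xhat m n)) by (apply Rmult_le_compat_l; lra).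
    lra.
Qed.

Lemma is_mmin_m_min m0 xhat ebar p N :
  (exists m, (m0 <= m)%nat /\ good xhat ebar p N m) ->
  is_mmin m0 xhat ebar p N (m_min m0 xhat ebar p N).
Proof.
  intros Hex. unfold m_min. apply epsilon_spec.
  destruct (dec_inh_nat_subset_has_unique_least_element _
              (fun m => classic ((m0 <= m)%nat /\ good xhat ebar p N m)) Hex)
    as [m [[[Hm Hgood] Hleast] _]].
  exists m. split; [exact Hm |]. split; [exact Hgood |].
  intros m' Hm' Hlt Hgood'. specialize (Hleast m' (conj Hm' Hgood')). lia.
Qed.

Lemma mantissa_ge_ln (K d c B S : R) (m : nat) :
  0 < K -> 0 < d -> 0 < c -> 0 < B ->
  K * (/2) ^ m * d * exp S <= c * B ->
  S + ln (K * d / (c * B)) <= INR m * ln 2.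
Proof.
  intros HK Hd Hc HB Hle.
  pose proof (exp_pos S). pose proof (halfpow_pos m).
  apply ln_le in Hle; [| repeat apply Rmult_lt_0_compat; assumption].
  rewrite !ln_mult, ln_exp, ln_pow, ln_Rinv in Hle
    by (repeat apply Rmult_lt_0_compat; try apply exp_pos; try apply pow_lt; lra).
  unfold Rdiv.
  rewrite ln_mult, ln_mult, ln_Rinv, ln_mult by
    (try apply Rinv_0_lt_compat; repeat apply Rmult_lt_0_compat; lra).
  lra.
Qed.
Lemma INR_cv_infty : cv_infty INR.
Proof.
  intros M. destruct (INR_unbounded M) as [N HN].
  exists N. intros n Hn. pose proof (le_INR _ _ Hn). lra.
Qed.

Lemma Un_cv_const c : Un_cv (fun _ => c) c.
Proof.
  intros eps Heps. exists 0%nat. intros n _.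
  unfold R_dist. rewrite Rminus_diag, Rabs_R0. exact Heps.
Qed.

Lemma limsup_ge_of_eventually_ge (u w : nat -> R) (c : R) (N1 : nat) :
  (forall N, (N1 <= N)%nat -> w N <= u N) -> Un_cv w c -> limsup_ge u c.
Proof.
  intros Hwu Hw eps Heps N0.
  destruct (Hw eps Heps) as [N2 HN2].
  exists (max N0 (max N1 N2)). split; [lia |].
  specialize (HN2 (max N0 (max N1 N2)) ltac:(lia)).
  specialize (Hwu (max N0 (max N1 N2)) ltac:(lia)).
  unfold R_dist in HN2. apply Rabs_def2 in HN2. lra.
Qed.

Lemma limsup_ge_of_average (v s : nat -> R) (l C lam : R) :
  0 < l -> (forall N, s N + C <= v N * l) ->
  Un_cv (fun N => / INR N * s N) lam ->
  limsup_ge (fun N => v N / INR N) (lam / l).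
Proof.
  intros Hl Hvs Hs.
  apply limsup_ge_of_eventually_ge
    with (w := fun N => (/ INR N * s N + C * / INR N) * / l) (N1 := 1%nat).
  - intros N HN. assert (0 < INR N) by (apply lt_0_INR; lia).
    replace ((/ INR N * s N + C * / INR N) * / l) with ((s N + C) / l * / INR N)
      by (field; lra).
    apply Rmult_le_compat_r; [left; apply Rinv_0_lt_compat; lra |].
    apply (Rmult_le_reg_r l); [exact Hl |].
    replace ((s N + C) / l * l) with (s N + C) by (field; lra).
    apply Hvs.
  - replace (lam / l) with ((lam + C * 0) * / l) by (unfold Rdiv; ring).
    apply CV_mult; [apply CV_plus | apply Un_cv_const].
    + exact Hs.
    + apply CV_mult; [apply Un_cv_const | apply cv_infty_cv_0, INR_cv_infty].
Qed.

Section ComputedOrbit.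

Variables (a b K x0 Lam : R) (f fp : R -> R) (m0 : nat) (xhat ebar Lbar : nat -> nat -> R).
Hypotheses (Hab : a <= b) (H0D : ~ (a <= 0 <= b))
  (HK : 0 < K) (HKm0 : K * (/2) ^ m0 < 1)
  (Hxhat : forall m n, (m0 <= m)%nat -> a <= xhat m n <= b)
  (HL0 : forall m n, (m0 <= m)%nat -> Lbar m n >= 0)
  (HLam : forall m n, (m0 <= m)%nat -> Lbar m n <= Lam)
  (He0 : forall m, (m0 <= m)%nat -> ebar m 0%nat = delta K m * Rabs (xhat m 0%nat))
  (HeS : forall m n, (m0 <= m)%nat ->
     ebar m (S n) = Lbar m n * ebar m n + delta K m * Rabs (xhat m (S n)))
  (Hii : forall m n, (m0 <= m)%nat -> Rabs (xhat m n - orbit f x0 n) <= ebar m n)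
  (Hiii : forall m n z, (m0 <= m)%nat ->
     xhat m n - ebar m n <= z <= xhat m n + ebar m n -> a < z < b ->
     Rabs (fp z) <= Lbar m n)
  (Hiv : forall n, a < orbit f x0 n < b)
  (Hfp0 : forall n, fp (orbit f x0 n) <> 0).

Let d := Rmin (Rabs a) (Rabs b).
Let B := Rmax (Rabs a) (Rabs b).
Let g k := ln (Rabs (fp (orbit f x0 k))).

Lemma xhat_bounds m n : (m0 <= m)%nat -> 0 < d /\ d <= Rabs (xhat m n) <= B.
Proof. intros Hm. apply Rabs_bounds_interval; auto. Qed.

Lemma fp_orbit_le_Lbar m n : (m0 <= m)%nat -> Rabs (fp (orbit f x0 n)) <= Lbar m n.
Proof.
  intros Hm. apply (Hiii m n); [exact Hm | | apply Hiv].
  specialize (Hii m n Hm).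
  pose proof (Rle_abs (xhat m n - orbit f x0 n)).
  pose proof (Rle_abs (orbit f x0 n - xhat m n)) as Hsym.
  rewrite Rabs_minus_sym in Hsym. lra.
Qed.

Lemma ebar_ge_exp_psum m n : (m0 <= m)%nat -> delta K m * d * exp (psum g n) <= ebar m n.
Proof.
  intros Hm. pose proof (delta_pos K m0 HK HKm0 m Hm).
  pose proof (xhat_bounds m 0 Hm).
  apply error_ge_prod with (xh := xhat m) (L := Lbar m);
    [lra | apply He0, Hm | intro k; apply HeS, Hm | lra
    | intro k; apply xhat_bounds, Hm | intro k; split].
  - apply Rabs_pos_lt, Hfp0.
  - apply fp_orbit_le_Lbar, Hm.
Qed.

Lemma ebar_le_growth m n : (m0 <= m)%nat ->
  ebar m n <= delta K m * B * (INR n + 1) * (1 + Lam) ^ n.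
Proof.
  intros Hm. pose proof (delta_pos K m0 HK HKm0 m Hm).
  apply error_le_poly with (xh := xhat m) (L := Lbar m);
    [lra | apply He0, Hm | intro k; apply HeS, Hm
    | intro k; apply xhat_bounds, Hm | intro k; split].
  - apply Rge_le, HL0, Hm.
  - apply HLam, Hm.
Qed.

Lemma m_min_ge_psum p N :
  psum g N + ln (K * d / (rel_tol p * B)) <= INR (m_min m0 xhat ebar p N) * ln 2.
Proof.
  destruct (xhat_bounds m0 0 (Nat.le_refl m0)) as [d_pos Hd].
  pose proof (rel_tol_pos p).
  assert (Lam_ge0 : 0 <= Lam)
    by (pose proof (HL0 m0 0 (Nat.le_refl m0)); pose proof (HLam m0 0 (Nat.le_refl m0)); lra).
  destruct (is_mmin_m_min m0 xhat ebar p N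
              (good_exists xhat ebar p N m0 K d B Lam HK HKm0 d_pos ltac:(lra) Lam_ge0
                 (fun m n Hm => proj1 (proj2 (xhat_bounds m n Hm))) ebar_le_growth))
    as [Hm [Hgood _]].
  set (m := m_min m0 xhat ebar p N) in *.
  apply mantissa_ge_ln; try lra.
  pose proof (exp_pos (psum g N)). pose proof (delta_ge K m0 HK HKm0 m Hm).
  destruct (xhat_bounds m N Hm) as [_ [_ Hx]].
  apply Rle_trans with (delta K m * d * exp (psum g N)); [apply Rmult_le_compat_r; nra |].
  eapply Rle_trans; [apply ebar_ge_exp_psum, Hm |].
  eapply Rle_trans; [apply Hgood, Nat.le_refl | apply Rmult_le_compat_l; lra].
Qed.

End ComputedOrbit.

Theorem mainTheorem7
  (a b : R) (f fp : R -> R) (K : R) (m0 : nat) (x0 : R)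
  (xhat ebar Lbar : nat -> nat -> R)
  (* D = [a,b] compact interval, 0 not in D *)
  (Hab : a <= b) (H0D : ~ (a <= 0 <= b))
  (* f : D -> D, continuous on D *)
  (HfD : forall x, a <= x <= b -> a <= f x <= b)
  (Hfcont : forall x, a <= x <= b -> limit1_in f (fun y => a <= y <= b) (f x) x)
  (* f is C^1 on int D with derivative fp, fp bounded on int D *)
  (Hfder : forall x, a < x < b -> derivable_pt_lim f x (fp x))
  (Hfpcont : forall x, a < x < b -> continuity_pt fp x)
  (Hfpbd : exists B : R, forall x, a < x < b -> Rabs (fp x) <= B)
  (* constants *)
  (HK : K > 0) (Hm0 : (1 <= m0)%nat) (HKm0 : K * (/2) ^ m0 < 1)
  (Hx0 : a <= x0 <= b)
  (* computed orbits *)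
  (Hxhat : forall m n, (m0 <= m)%nat -> a <= xhat m n <= b)
  (HL0 : forall m n, (m0 <= m)%nat -> Lbar m n >= 0)
  (He0 : forall m, (m0 <= m)%nat -> ebar m 0%nat = delta K m * Rabs (xhat m 0%nat))
  (HeS : forall m n, (m0 <= m)%nat ->
     ebar m (S n) = Lbar m n * ebar m n + delta K m * Rabs (xhat m (S n)))
  (* (i) *)
  (Hi : exists Lam : R, Lam >= 0 /\ forall m n, (m0 <= m)%nat -> Lbar m n <= Lam)
  (* (ii) *)
  (Hii : forall m n, (m0 <= m)%nat -> Rabs (xhat m n - orbit f x0 n) <= ebar m n)
  (* (iii) *)
  (Hiii : forall m n z, (m0 <= m)%nat ->
     xhat m n - ebar m n <= z <= xhat m n + ebar m n -> a < z < b ->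
     Rabs (fp z) <= Lbar m n)
  (* (iv) *)
  (Hiv : forall n, a < orbit f x0 n < b)
  (Hfp0 : forall n, fp (orbit f x0 n) <> 0)
  (lam : R)
  (Hlam : Un_cv (fun n => / INR n * psum (fun k => ln (Rabs (fp (orbit f x0 k)))) n) lam) :
  forall p : Z, sigma_ge m0 xhat ebar p (lam / ln 2).
Proof.
  intros p.
  destruct Hi as [Lam [_ HLam]].
  assert (ln2_pos : 0 < ln 2) by (pose proof ln_lt_2; lra).
  exact (limsup_ge_of_average _ _ _ _ _ ln2_pos
           (m_min_ge_psum a b K x0 Lam f fp m0 xhat ebar Lbar Hab H0D HK HKm0 Hxhat
              HL0 HLam He0 HeS Hii Hiii Hiv Hfp0 p)
           Hlam).
Qed.
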